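(* Let $Z$ be a smooth toric variety with ample anticanonical bundle which is obtained from $\mathbb{A}^l$ by a sequence of blow-ups, each centered in a torus-fixed point of the previous variety. Then $Z$ is either $\mathbb{A}^l$ or the blow-up of $\mathbb{A}^l$ at the torus-fixed point (the origin).
   Context: $\mathbb{A}^l$ is the affine toric variety of the torus $S=(\mathbb{C}^* )^l$ (fan: the cone spanned by a lattice basis and its faces); blow-ups at torus-fixed points are toric, corresponding to star subdivision of a maximal cone at the sum of its generators. *)

From HB Require Import structures.
From mathcomp Require Import all_boot all_order all_algebra.
From mathcomp Require Import finmap.
Set Implicit Arguments. Unset Strict Implicit. Unset Printing Implicit Defensive.
Import Order.TTheory GRing.Theory Num.Theory.
Local Open Scope ring_scope.
Local Open Scope fset_scope.

Definition lat (l : nat) := 'rV[int]_l.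

(* A smooth full-dimensional cone, given by its set of primitive ray
   generators (a lattice basis for the cones considered here). *)
Definition cone (l : nat) := {fset lat l}.

(* A fan all of whose maximal cones are full-dimensional, given by the set
   of its maximal cones (the fan is the set of their faces). *)
Definition fan (l : nat) := {fset cone l}.

(* The cone spanned by the standard basis e_1,...,e_l: the fan of A^l. *)
Definition std_cone (l : nat) : cone l :=
  [fset (delta_mx 0 i : lat l) | i in 'I_l].

Definition affine_fan (l : nat) : fan l := [fset std_cone l].

(* Star subdivision of the maximal cone s of F at the sum v of its
   generators: s is replaced by the cones  cone(v, s \ {u}),  u in s.
   This is the fan of the blow-up at the torus-fixed point of s. *)
Definition star_subdiv (l : nat) (F : fan l) (s : cone l) : fan l :=
  let v := \sum_(u <- s) u in
  (F `\ s) `|` [fset (v |` (s `\ u)) | u in s].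

(* Fans of the toric varieties obtained from A^l by a finite sequence of
   blow-ups, each centered at a torus-fixed point (= a maximal,
   full-dimensional cone) of the previous variety. *)
Inductive iterated_blowup (l : nat) : fan l -> Prop :=
| ib_base : iterated_blowup (affine_fan l)
| ib_blow (F : fan l) (s : cone l) :
    iterated_blowup F -> s \in F -> iterated_blowup (star_subdiv F s).

(* Ampleness of the anticanonical divisor -K = sum_rho D_rho on a smooth
   toric variety whose fan has convex full-dimensional support: its support
   function is strictly convex, i.e. for every maximal cone s there is a
   linear form psi_s in M with psi_s(u) = 1 on the generators of s and
   psi_s(u) < 1 on every other ray generator of the fan. *)
Definition anticanonical_ample (l : nat) (F : fan l) : Prop :=
  forall s : cone l, s \in F ->
    exists psi : 'cV[int]_l,
      (forall u, u \in s -> (u *m psi) 0 0 = 1) /\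
      (forall t : cone l, t \in F -> forall u, u \in t -> u \notin s ->
         (u *m psi) 0 0 < 1).

From HB Require Import structures.
From mathcomp Require Import all_boot all_order all_algebra.
From mathcomp Require Import finmap.
From mathcomp Require Import zify.
Import Order.TTheory GRing.Theory Num.Theory.

(* Let v be the sum of the generators of a maximal cone s with l generators.
   A support function psi of -K equal to 1 on the cone {v} u s\{u} of the
   star subdivision at s takes the value psi(u) = psi(v) - (l - 1) = 2 - l.
   Hence a ray w outside {v} u s with w + u = sum_{x in s\{u}} a_x x and
   sum a_x >= 3 - l has psi(w) >= 1, so -K is not ample after blowing up s.
   Such a certificate exists for every new cone {v} u s\{k}: take u = m <> k
   and w = k, since k + m = v - sum_{x in s\{k,m}} x.  Rays are never removed
   by later subdivisions, so certificates survive them.  Thus for l >= 2 a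
   second blow-up always destroys ampleness.  Keeping every generator of
   positive coordinate sum makes v distinct from the old generators; for
   l = 1 blowing up does nothing. *)
Local Open Scope fset_scope.
Local Open Scope ring_scope.

Lemma fset_exists_neq {T : choiceType} {A : {fset T}} (x : T) :
  (1 < #|` A|)%N -> exists2 y, y \in A & y != x.
Proof.
rewrite (cardfsD1 x) => A2.
have : (0 < #|` A `\ x|)%N by move: A2; case: (x \in A) => /=; lia.
by rewrite cardfs_gt0 => /fset0Pn[y /fsetD1P[yx yA]]; exists y.
Qed.

Section ToricFans.
Set Implicit Arguments. Unset Strict Implicit.
Variable l : nat.
Implicit Types (F : fan l) (s t : cone l) (x u w : lat l).

Definition pairing (psi : 'cV[int]_l) x : int := (x *m psi) 0 0.

Lemma pairingD psi x y : pairing psi (x + y) = pairing psi x + pairing psi y.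
Proof. by rewrite /pairing mulmxDl mxE. Qed.

Lemma pairingZ psi a x : pairing psi (a *: x) = a * pairing psi x.
Proof. by rewrite /pairing -scalemxAl mxE. Qed.

Lemma pairing_sum psi (I : Type) (r : seq I) (f : I -> lat l) :
  pairing psi (\sum_(i <- r) f i) = \sum_(i <- r) pairing psi (f i).
Proof. by rewrite /pairing mulmx_suml summxE. Qed.

Lemma sum_fset_const (A : {fset lat l}) (c : int) :
  \sum_(x <- A) c = c * #|` A|%:Z.
Proof. by rewrite big_const_seq count_predT iter_addr_0 -natz mulr_natr. Qed.

Definition degree x : int := pairing (const_mx 1) x.

Lemma degree_delta (i : 'I_l) : degree (delta_mx 0 i) = 1.
Proof. by rewrite /degree /pairing -rowE !mxE. Qed.

Definition cone_sum s : lat l := \sum_(u <- s) u.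

Definition positive_cone s : Prop := forall x, x \in s -> 0 < degree x.

Section PositiveCone.
Variable s : cone l.
Hypothesis pos_s : positive_cone s.

Lemma degree_le_cone_sum x : x \in s -> degree x <= degree (cone_sum s).
Proof.
move=> xs; rewrite /degree pairing_sum (big_fsetD1 x) //= lerDl.
by rewrite big_seq sumr_ge0 // => y /fsetD1P[_ /pos_s /ltW].
Qed.

Lemma degree_lt_cone_sum x y :
  x \in s -> y \in s -> x != y -> degree x < degree (cone_sum s).
Proof.
move=> xs ys xy; rewrite /degree pairing_sum (big_fsetD1 x) //= ltrDl.
rewrite (big_fsetD1 y) ?in_fsetD1 ?(eq_sym y) ?xy //= ltr_pwDl ?pos_s //.
by rewrite big_seq sumr_ge0 // => z /fsetD1P[_ /fsetD1P[_ /pos_s /ltW]].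
Qed.

Lemma cone_sum_notin : (1 < #|` s|)%N -> cone_sum s \notin s.
Proof.
move=> s2; apply/negP => vs; have [y ys yv] := fset_exists_neq (cone_sum s) s2.
by have := degree_lt_cone_sum vs ys; rewrite eq_sym yv ltxx => /(_ isT).
Qed.

Lemma positive_star_cone u : u \in s -> positive_cone (cone_sum s |` (s `\ u)).
Proof.
move=> us x /fset1UP[->|/fsetD1P[_ /pos_s]] //.
exact: lt_le_trans (pos_s us) (degree_le_cone_sum us).
Qed.

Lemma card_star_cone u :
  (1 < #|` s|)%N -> u \in s -> #|` cone_sum s |` (s `\ u)| = #|` s|.
Proof.
move=> s2 us; rewrite cardfsU1 [in RHS](cardfsD1 u) us in_fsetD1.
by rewrite (negbTE (cone_sum_notin s2)) andbF.
Qed.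

End PositiveCone.

Lemma mem_star_subdiv_new F s u :
  u \in s -> cone_sum s |` (s `\ u) \in star_subdiv F s.
Proof. by move=> us; rewrite in_fsetU; apply/orP; right; apply/imfsetP; exists u. Qed.

Lemma mem_star_subdiv_old F s t : t \in F -> t != s -> t \in star_subdiv F s.
Proof. by move=> tF ts; rewrite in_fsetU in_fsetD1 ts tF. Qed.

Lemma star_subdivP F s t : t \in star_subdiv F s ->
  (t \in F /\ t != s) \/ exists2 u, u \in s & t = cone_sum s |` (s `\ u).
Proof.
by rewrite in_fsetU in_fsetD1 => /orP[/andP[ts tF]|/imfsetP[u us ->]];
  [left | right; exists u].
Qed.

Lemma star_subdiv_singleton F x : [fset x] \in F -> star_subdiv F [fset x] = F.
Proof.
have x_cone : x |` ([fset x] `\ x) = [fset x] by rewrite fsetDv fsetU0.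
move=> xF; rewrite /star_subdiv big_seq_fset1.
suff -> : [fset x |` ([fset x] `\ u) | u in [fset x]] = [fset [fset x]].
  by rewrite fsetUC fsetD1K.
apply/fsetP => c; rewrite in_fset1; apply/imfsetP/eqP => [[u /fset1P -> ->]|->].
  exact: x_cone.
by exists x; rewrite ?fset11 ?x_cone.
Qed.

Definition ray F w : Prop := exists2 t, t \in F & w \in t.

Lemma ray_star_subdiv F s w :
  (1 < #|` s|)%N -> ray F w -> ray (star_subdiv F s) w.
Proof.
move=> s2 [t tF wt]; have [ts|ts] := eqVneq t s; last first.
  by exists t => //; apply: mem_star_subdiv_old.
subst t; have [k ks kw] := fset_exists_neq w s2.
exists (cone_sum s |` (s `\ k)); first exact: mem_star_subdiv_new.
by rewrite fset1Ur // in_fsetD1 eq_sym kw.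
Qed.

Definition full_positive_fan F : Prop :=
  forall s, s \in F -> #|` s| = l /\ positive_cone s.

Lemma card_std_cone : #|` std_cone l| = l.
Proof.
rewrite card_imfset.
  rewrite -(card_uniqP (enum_finmem_uniq _)) -[RHS]card_ord.
  by apply: eq_card => i; rewrite enum_finmemE.
move=> i j /matrixP /(_ ord0 i); rewrite !mxE eqxx /=.
by case: eqP => // _ /eqP; rewrite oner_eq0.
Qed.

Lemma full_positive_affine_fan : full_positive_fan (affine_fan l).
Proof.
move=> s /fset1P ->; split; first exact: card_std_cone.
by move=> x /imfsetP[i _ ->]; rewrite degree_delta.
Qed.

Lemma full_positive_star_subdiv F s : (1 < l)%N ->
  full_positive_fan F -> s \in F -> full_positive_fan (star_subdiv F s).
Proof.
move=> l2 posF sF t /star_subdivP[[/posF] //|[u us ->]].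
have [card_s pos_s] := posF s sF.
split; last exact: positive_star_cone.
by rewrite card_star_cone ?card_s.
Qed.

Definition blowup_obstruction F s : Prop :=
  exists u w (a : lat l -> int),
    [/\ u \in s, ray F w, w \notin cone_sum s |` s,
        w + u = \sum_(x <- s `\ u) a x *: x & 3 - l%:Z <= \sum_(x <- s `\ u) a x].

Lemma not_ample_star_subdiv F s : #|` s| = l ->
  blowup_obstruction F s -> ~ anticanonical_ample (star_subdiv F s).
Proof.
move=> card_s [u [w [a [us [t tF wt] w_out rel sum_a]]]].
move: w_out; rewrite in_fset1U negb_or => /andP[w_v w_s].
move=> /(_ _ (mem_star_subdiv_new F us)) [psi [psi1 psi_lt1]].
have psi_facet x : x \in s `\ u -> pairing psi x = 1.
  by move=> xs; apply: psi1; rewrite fset1Ur.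
have psi_v : pairing psi (cone_sum s) = 1 by apply: psi1; rewrite fset1U1.
have psi_u : pairing psi (cone_sum s) = pairing psi u + #|` s `\ u|%:Z.
  rewrite /cone_sum pairing_sum (big_fsetD1 u) //= (eq_big_seq (fun=> 1)) //.
  by rewrite sum_fset_const mul1r.
have psi_w : pairing psi w + pairing psi u = \sum_(x <- s `\ u) a x.
  rewrite -pairingD rel pairing_sum; apply: eq_big_seq => x xs.
  by rewrite pairingZ psi_facet ?mulr1.
have t_new : t \in star_subdiv F s.
  by apply: mem_star_subdiv_old => //; apply: contraNneq w_s => <-.
have w_new : w \notin cone_sum s |` (s `\ u).
  by rewrite in_fset1U in_fsetD1 negb_or w_v (negbTE w_s) andbF.
have card_facet : #|` s| = (1 + #|` s `\ u|)%N by rewrite (cardfsD1 u) us.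
have := psi_lt1 t t_new w wt w_new; rewrite -/(pairing psi w).
move: psi_u psi_w sum_a card_facet; rewrite psi_v card_s; lia.
Qed.

Lemma blowup_obstruction_star_subdiv F s t : (1 < #|` s|)%N ->
  blowup_obstruction F t -> blowup_obstruction (star_subdiv F s) t.
Proof.
move=> s2 [u [w [a [? rw ? ? ?]]]].
by exists u, w, a; split => //; apply: ray_star_subdiv.
Qed.

Lemma blowup_obstruction_star_cone F s k : (1 < l)%N -> #|` s| = l ->
  positive_cone s -> k \in s ->
  blowup_obstruction (star_subdiv F s) (cone_sum s |` (s `\ k)).
Proof.
move=> l2 card_s pos_s ks; set v := cone_sum s.
have s2 : (1 < #|` s|)%N by rewrite card_s.
have [m ms mk] := fset_exists_neq k s2.
have mk' : m \in s `\ k by rewrite in_fsetD1 mk.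
have v_s : v \notin s := cone_sum_notin pos_s s2.
have vm : v != m by apply: contraNneq v_s => ->.
set B := s `\ k `\ m.
have v_B : v \notin B by rewrite !in_fsetD1 (negbTE v_s) !andbF.
have facet : (v |` (s `\ k)) `\ m = v |` B.
  apply/fsetP => x; rewrite !(in_fsetD1, in_fset1U).
  by have [->|//] := eqVneq x v; rewrite (negbTE v_s) vm !andbF.
have v_split : v = k + m + \sum_(x <- B) x.
  by rewrite /v /cone_sum (big_fsetD1 k) //= (big_fsetD1 m) //= addrA.
have card_B : #|` s| = (2 + #|` B|)%N.
  by rewrite (cardfsD1 k) ks (cardfsD1 m (s `\ k)) mk'.
exists m, k, (fun x => if x == v then 1 else -1); split.
- by rewrite fset1Ur.
- exists (v |` (s `\ m)); first exact: mem_star_subdiv_new.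
  by rewrite fset1Ur // in_fsetD1 eq_sym mk.
- have km : k != m by rewrite eq_sym.
  have k_lt_v : degree k < degree v := degree_lt_cone_sum pos_s ks ms km.
  have v_lt_v' : degree v < degree (cone_sum (v |` (s `\ k))) :=
    degree_lt_cone_sum (positive_star_cone pos_s ks) (fset1U1 v _) (fset1Ur v mk') vm.
  rewrite !in_fset1U in_fsetD1 eqxx /= negb_or; apply/andP; split.
    by apply/eqP => kv'; move: (lt_trans k_lt_v v_lt_v'); rewrite -kv' ltxx.
  by rewrite orbF; apply: contraNneq v_s => <-.
- rewrite facet big_fsetU1 //= eqxx scale1r.
  have -> : \sum_(x <- B) (if x == v then 1 else -1) *: x = - \sum_(x <- B) x.
    rewrite -sumrN; apply: eq_big_seq => x xB.
    by rewrite ifN ?scaleN1r //; apply: contraNneq v_B => <-.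
  by rewrite v_split addrK.
- rewrite facet big_fsetU1 //= eqxx (eq_big_seq (fun=> -1)) ?sum_fset_const.
    by move: card_B; rewrite card_s; lia.
  by move=> x xB; rewrite ifN //; apply: contraNneq v_B => <-.
Qed.

Definition obstructed_fan F : Prop :=
  forall t, t \in F -> blowup_obstruction F t.

Lemma obstructed_star_subdiv F s : (1 < l)%N -> full_positive_fan F -> s \in F ->
  (forall t, t \in F -> t != s -> blowup_obstruction F t) ->
  obstructed_fan (star_subdiv F s).
Proof.
move=> l2 posF sF obsF t; have [card_s pos_s] := posF s sF.
case/star_subdivP => [[tF ts]|[k ks ->]]; last exact: blowup_obstruction_star_cone.
by apply: blowup_obstruction_star_subdiv; [rewrite card_s | exact: obsF].
Qed.

End ToricFans.

Lemma iterated_blowup_full_positive l (F : fan l) :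
  (1 < l)%N -> iterated_blowup F -> full_positive_fan F.
Proof.
move=> l2; elim=> [|F' s _ posF' sF']; first exact: full_positive_affine_fan.
exact: full_positive_star_subdiv.
Qed.

Lemma iterated_blowup_obstructed l (F : fan l) :
  (1 < l)%N -> iterated_blowup F -> F = affine_fan l \/ obstructed_fan F.
Proof.
move=> l2; elim=> [|F' s ibF' IH sF']; [by left | right].
apply: obstructed_star_subdiv => //; first exact: iterated_blowup_full_positive.
move=> t tF' ts; case: IH => [F'E|]; last exact.
by move: tF' sF' ts; rewrite F'E => /fset1P -> /fset1P ->; rewrite eqxx.
Qed.

Lemma iterated_blowup_dim1 (F : fan 1) : iterated_blowup F -> F = affine_fan 1.
Proof.
elim=> [|F' s _ -> /fset1P ->] //.
have /eqP/cardfs1P[x std_x] := card_std_cone 1.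
by rewrite std_x star_subdiv_singleton // -std_x fset11.
Qed.

Theorem proposition3p1 (l : nat) (hl : (0 < l)%N) (F : fan l) :
  iterated_blowup F -> anticanonical_ample F ->
  F = affine_fan l \/ F = star_subdiv (affine_fan l) (std_cone l).
Proof.
move=> ibF ampleF; have [l2|l_le1] := ltnP 1 l; last first.
  have l1 : l = 1%N by apply/eqP; rewrite eqn_leq l_le1 hl.
  by subst l; left; exact: iterated_blowup_dim1.
case: ibF ampleF => [|F' s ibF' sF'] ampleF; first by left.
have [F'E|obsF'] := iterated_blowup_obstructed l2 ibF'.
  by right; move: sF'; rewrite F'E => /fset1P ->.
have [card_s _] := iterated_blowup_full_positive l2 ibF' sF'.
by case: (not_ample_star_subdiv card_s (obsF' s sF') ampleF).
Qed.
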